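(* Let $X\sim P_X$ be a discrete random variable on $\mathcal{X}$, let $M$ be a positive integer and $\gamma\ge1$. Then there exists an $M$-type distribution $P_{\hat X}$ (on $\mathcal{X}$, possibly augmented by one extra symbol $\mathtt{e}\notin\mathcal{X}$ to which $P_X$ assigns probability zero) such that $$E_\gamma(P_{\hat X}\|P_X)\le\Big[1-\frac\gamma2\,\mathbb{P}\big[\imath_X(X)\le\log(\gamma M)\big]\Big]^+.$$
   Context: A distribution $P$ on a discrete set is an $M$-type if every probability $P(x)$ is an integer multiple of $1/M$. $\imath_X(x):=\log\frac1{P_X(x)}$. $E_\gamma(P\|Q):=\sup_{\mathcal{A}}\{P(\mathcal{A})-\gamma Q(\mathcal{A})\}$. $[a]^+=\max\{a,0\}$. *)

From Stdlib Require Import Reals List.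
Open Scope R_scope.

Definition fsum {X : Type} (P : X -> R) (l : list X) : R :=
  fold_right (fun x acc => P x + acc) 0 l.

Definition partial_masses {X : Type} (P : X -> R) (A : X -> Prop) (s : R) : Prop :=
  exists l : list X, NoDup l /\ (forall x, In x l -> A x) /\ s = fsum P l.

(* prob P A p : p = P(A) = sum_{x in A} P x (a sum of nonnegative terms,
   i.e. the supremum of its finite partial sums). *)
Definition prob {X : Type} (P : X -> R) (A : X -> Prop) (p : R) : Prop :=
  is_lub (partial_masses P A) p.

Definition is_distribution {X : Type} (P : X -> R) : Prop :=
  (forall x, 0 <= P x) /\ prob P (fun _ => True) 1.

Definition is_M_type {X : Type} (M : nat) (P : X -> R) : Prop :=
  forall x, exists k : nat, P x = INR k / INR M.

Definition Egamma_set {X : Type} (gamma : R) (P Q : X -> R) (v : R) : Prop :=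
  exists (A : X -> Prop) (pa qa : R), prob P A pa /\ prob Q A qa /\ v = pa - gamma * qa.

Definition Egamma {X : Type} (gamma : R) (P Q : X -> R) (e : R) : Prop :=
  is_lub (Egamma_set gamma P Q) e.

(* P_X extended to X + {e}, giving probability zero to the extra symbol e = None *)
Definition extend0 {X : Type} (P : X -> R) (y : option X) : R :=
  match y with Some x => P x | None => 0 end.

(* information density: i_X(x) <= log(gamma M)  (false when P x = 0, i_X = +oo) *)
Definition info_le {X : Type} (P : X -> R) (gamma : R) (M : nat) (x : X) : Prop :=
  0 < P x /\ ln (1 / P x) <= ln (gamma * INR M).

(** Atoms with [i_X(x) <= log (gamma M)] have mass at least [1/(gamma M)], so
    they are finitely many.  Give each of them [floor (gamma M P_X(x))] units of
    mass [1/M] (greedily, stopping once [M] units are spent) and put the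
    remaining units on the extra symbol [e].  Off [e] the new distribution is
    dominated by [gamma P_X], so [E_gamma] is at most the mass left on [e].
    Since [floor t >= t/2] for [t >= 1], these atoms ask for at least
    [gamma M/2 P[i_X(X) <= log (gamma M)]] units in total, which bounds the
    mass left on [e] by [[1 - gamma/2 P[i_X(X) <= log (gamma M)]]^+]. *)
From Stdlib Require Import Reals List Lra Lia ZArith FinFun Classical ClassicalEpsilon.
Open Scope R_scope.

Definition classic_eq_dec {T : Type} (x y : T) : {x = y} + {x <> y} :=
  excluded_middle_informative (x = y).

Definition filter_prop {T : Type} (A : T -> Prop) (l : list T) : list T :=
  filter (fun x => if excluded_middle_informative (A x) then true else false) l.

Lemma filter_prop_In {T : Type} (A : T -> Prop) l x :
  In x (filter_prop A l) <-> In x l /\ A x.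
Proof.
  unfold filter_prop; rewrite filter_In.
  destruct (excluded_middle_informative (A x)); intuition discriminate.
Qed.

Section FiniteSums.

Context {T : Type}.
Implicit Types (P Q : T -> R) (l : list T).

Lemma fsum_ge0 P l : (forall x, 0 <= P x) -> 0 <= fsum P l.
Proof. intros HP; induction l as [|a l IH]; simpl; [lra|specialize (HP a); lra]. Qed.

Lemma fsum_le P Q l : (forall x, In x l -> P x <= Q x) -> fsum P l <= fsum Q l.
Proof.
  induction l as [|a l IH]; simpl; intros H; [lra|].
  assert (P a <= Q a) by auto; assert (fsum P l <= fsum Q l) by auto; lra.
Qed.

Lemma fsum_le0 P l : (forall x, In x l -> P x <= 0) -> fsum P l <= 0.
Proof.
  induction l as [|a l IH]; simpl; intros H; [lra|].
  assert (P a <= 0) by auto; assert (fsum P l <= 0) by auto; lra.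
Qed.

Lemma fsum_const c l : fsum (fun _ => c) l = INR (length l) * c.
Proof.
  induction l as [|a l IH]; [simpl; ring|].
  change (c + fsum (fun _ => c) l = INR (S (length l)) * c); rewrite IH, S_INR; ring.
Qed.

Lemma fsum_scale c P l : fsum (fun x => c * P x) l = c * fsum P l.
Proof. induction l as [|a l IH]; simpl; [ring|rewrite IH; ring]. Qed.

Lemma fsum_sub_scale c P Q l :
  fsum (fun x => P x - c * Q x) l = fsum P l - c * fsum Q l.
Proof. induction l as [|a l IH]; simpl; [ring|rewrite IH; ring]. Qed.

Lemma fsum_INR (g : T -> nat) l :
  fsum (fun x => INR (g x)) l = INR (list_sum (map g l)).
Proof. induction l as [|a l IH]; simpl; [reflexivity|rewrite IH, plus_INR; reflexivity]. Qed.

Lemma fsum_INR_div (g : T -> nat) c l :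
  fsum (fun x => INR (g x) / c) l = INR (list_sum (map g l)) / c.
Proof.
  induction l as [|a l IH]; simpl fsum; [simpl; lra|].
  rewrite IH; simpl; rewrite plus_INR; lra.
Qed.

Lemma fsum_remove P a l : (forall x, 0 <= P x) -> In a l ->
  P a + fsum P (remove classic_eq_dec a l) <= fsum P l.
Proof.
  intros HP; induction l as [|b l IH]; simpl; intros Hin; [contradiction|].
  destruct (classic_eq_dec a b) as [<-|Hab].
  - assert (fsum P (remove classic_eq_dec a l) <= fsum P l); [|lra].
    clear IH Hin; induction l as [|c l IH]; simpl; [lra|].
    destruct (classic_eq_dec a c); simpl; specialize (HP c); lra.
  - destruct Hin as [->|Hin]; [congruence|simpl; specialize (IH Hin); lra].
Qed.

Lemma fsum_le_of_support P l' l : (forall x, 0 <= P x) -> NoDup l' ->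
  (forall x, In x l' -> P x = 0 \/ In x l) -> fsum P l' <= fsum P l.
Proof.
  intros HP Hl'; revert l; induction Hl' as [|a l' Ha Hl' IH]; intros l Hsupp; simpl.
  - now apply fsum_ge0.
  - destruct (Hsupp a (or_introl eq_refl)) as [-> | Hin].
    + assert (fsum P l' <= fsum P l); [|lra].
      apply IH; intros; apply Hsupp; right; assumption.
    + apply Rle_trans with (P a + fsum P (remove classic_eq_dec a l));
        [|now apply fsum_remove].
      apply Rplus_le_compat_l, IH; intros x Hx.
      destruct (Hsupp x (or_intror Hx)) as [|Hxl]; [now left|right].
      apply in_in_remove; [intros ->; contradiction|assumption].
Qed.

Lemma fsum_le_at_single_point P e r l : NoDup l -> P e <= r ->
  (forall x, x <> e -> P x <= 0) -> 0 <= r -> fsum P l <= r.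
Proof.
  intros Hl He Hneg Hr; induction Hl as [|a l Ha Hl IH]; simpl; [lra|].
  destruct (classic_eq_dec a e) as [->|Hae].
  - assert (fsum P l <= 0); [|lra].
    apply fsum_le0; intros x Hx; apply Hneg; intros ->; contradiction.
  - specialize (Hneg a Hae); lra.
Qed.

End FiniteSums.

Lemma fsum_map {T U : Type} (P : U -> R) (f : T -> U) l :
  fsum P (map f l) = fsum (fun x => P (f x)) l.
Proof. induction l as [|a l IH]; simpl; [reflexivity|rewrite IH; reflexivity]. Qed.

Section Probability.

Context {T : Type}.
Variables (P : T -> R) (A : T -> Prop).
Hypothesis P_ge0 : forall x, 0 <= P x.

Lemma partial_masses_le_fsum l : (forall x, A x -> P x = 0 \/ In x l) ->
  is_upper_bound (partial_masses P A) (fsum P l).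
Proof.
  intros Hsupp s (l' & Hl' & HA & ->).
  apply fsum_le_of_support; auto.
Qed.

Lemma prob_le_fsum p l : prob P A p ->
  (forall x, A x -> P x = 0 \/ In x l) -> p <= fsum P l.
Proof. intros Hp Hsupp; apply Hp, partial_masses_le_fsum, Hsupp. Qed.

Lemma prob_fsum l : NoDup l -> (forall x, In x l -> A x) ->
  (forall x, A x -> P x = 0 \/ In x l) -> prob P A (fsum P l).
Proof.
  intros Hl HA Hsupp; split; [now apply partial_masses_le_fsum|].
  intros b Hb; apply Hb; exists l; auto.
Qed.

End Probability.

Lemma fsum_le_prob {T : Type} (P : T -> R) (A : T -> Prop) p l :
  prob P A p -> NoDup l -> (forall x, In x l -> A x) -> fsum P l <= p.
Proof. intros Hp Hl HA; apply Hp; exists l; auto. Qed.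

Lemma prob_empty {T : Type} (P : T -> R) : prob P (fun _ => False) 0.
Proof.
  split.
  - intros s ([|x l] & _ & Hl & ->); [simpl; lra|].
    exfalso; apply (Hl x); now left.
  - intros b Hb; apply Hb; exists nil; repeat split; [constructor|intros x []].
Qed.

Lemma Egamma_set_le_dominated_off {T : Type} gamma (P Q : T -> R) S e v :
  0 <= gamma -> (forall y, 0 <= P y) -> 0 <= Q e -> NoDup S ->
  (forall y, P y = 0 \/ In y S) -> (forall y, y <> e -> P y <= gamma * Q y) ->
  Egamma_set gamma P Q v -> v <= P e.
Proof.
  intros Hg HP HQe HS Hsupp Hdom (A & pa & qa & Hpa & Hqa & ->).
  set (SA := filter_prop A S).
  assert (HSA : NoDup SA) by (apply NoDup_filter; assumption).
  assert (Hpa' : pa <= fsum P SA).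
  { apply (prob_le_fsum P A); [assumption..|].
    intros y Hy; destruct (Hsupp y) as [|HyS]; [now left|right].
    now apply filter_prop_In. }
  assert (Hqa' : gamma * fsum Q SA <= gamma * qa).
  { apply Rmult_le_compat_l; [assumption|].
    apply (fsum_le_prob Q A); [assumption..|].
    intros y Hy; now apply filter_prop_In in Hy. }
  assert (Hdiff : fsum (fun y => P y - gamma * Q y) SA <= P e).
  { apply (fsum_le_at_single_point _ e); [assumption| | |apply HP].
    - assert (0 <= gamma * Q e) by now apply Rmult_le_pos. lra.
    - intros y Hy; specialize (Hdom y Hy); lra. }
  rewrite fsum_sub_scale in Hdiff; lra.
Qed.

Lemma Egamma_exists_le {T : Type} gamma (P Q : T -> R) r :
  (forall v, Egamma_set gamma P Q v -> v <= r) ->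
  exists e, Egamma gamma P Q e /\ e <= r.
Proof.
  intros Hub; destruct (completeness (Egamma_set gamma P Q)) as [e He].
  - now exists r.
  - exists 0, (fun _ => False), 0, 0.
    split; [apply prob_empty|split; [apply prob_empty|ring]].
  - exists e; split; [assumption|]; apply He; exact Hub.
Qed.

Lemma enumerate_of_bounded_NoDup {T : Type} (A : T -> Prop) (N : nat) :
  (forall l, NoDup l -> (forall x, In x l -> A x) -> (length l <= N)%nat) ->
  exists l, NoDup l /\ forall x, A x <-> In x l.
Proof.
  intros Hbound.
  assert (Hgrow : forall d l0, NoDup l0 -> (forall x, In x l0 -> A x) ->
            (N - length l0 <= d)%nat -> exists l, NoDup l /\ forall x, A x <-> In x l).
  { induction d as [|d IH]; intros l0 Hl0 HA0 Hd;
      (destruct (classic (exists x, A x /\ ~ In x l0)) as [(x & Hx & Hnx)|Hall];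
       [|exists l0; split; [assumption|intros y; split; [|now apply HA0]];
         intros Hy; apply NNPP; intros Hny; apply Hall; now exists y]).
    all: assert (Hx0 : NoDup (x :: l0)) by (constructor; assumption).
    all: assert (Hxl0 : forall y, In y (x :: l0) -> A y) by (intros y [<-|Hy]; auto).
    - specialize (Hbound _ Hx0 Hxl0); simpl in Hbound; lia.
    - apply (IH (x :: l0)); auto; simpl; lia. }
  apply (Hgrow N nil); [constructor|intros x []|lia].
Qed.

Lemma enumerate_heavy_atoms {T : Type} (P : T -> R) (A : T -> Prop) (c : R) :
  is_distribution P -> 0 < c -> (forall x, A x -> c <= P x) ->
  exists l, NoDup l /\ forall x, A x <-> In x l.
Proof.
  intros [HP Htotal] Hc Hheavy.
  destruct (INR_archimed c 1 Hc) as [N HN].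
  apply (enumerate_of_bounded_NoDup A N); intros l Hl HA.
  assert (Hmass : INR (length l) * c <= 1).
  { rewrite <- fsum_const; apply Rle_trans with (fsum P l).
    - apply fsum_le; auto.
    - apply (fsum_le_prob P (fun _ => True)); auto. }
  apply INR_le; apply (Rmult_le_reg_r c); lra.
Qed.

Lemma info_le_mass {T : Type} (P : T -> R) gamma M x :
  0 < gamma * INR M -> info_le P gamma M x -> 1 <= gamma * INR M * P x.
Proof.
  intros HgM [HPx Hln].
  assert (Hinv : 1 / P x <= gamma * INR M).
  { destruct (Rle_or_lt (1 / P x) (gamma * INR M)) as [|Hlt]; [assumption|].
    apply ln_increasing in Hlt; lra. }
  apply (Rmult_le_compat_r (P x)) in Hinv; [|lra].
  replace (1 / P x * P x) with 1 in Hinv by (field; lra); lra.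
Qed.

Definition nat_floor (t : R) : nat := Z.to_nat (Int_part t).

Lemma nat_floor_spec t : 0 <= t -> INR (nat_floor t) <= t < INR (nat_floor t) + 1.
Proof.
  intros Ht; destruct (base_Int_part t) as [Hle Hgt].
  assert (Hpos : (-1 < Int_part t)%Z) by (apply lt_IZR; lra).
  unfold nat_floor; rewrite INR_IZR_INZ, Z2Nat.id by lia; lra.
Qed.

Lemma le_twice_nat_floor t : 1 <= t -> t <= 2 * INR (nat_floor t).
Proof.
  intros Ht; destruct (nat_floor_spec t) as [Hle Hlt]; [lra|].
  assert (1 <= INR (nat_floor t)); [|lra].
  destruct (nat_floor t) as [|n]; [simpl in Hlt; lra|].
  rewrite S_INR; pose proof (pos_INR n); lra.
Qed.

Section Allocation.

Context {T : Type}.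
Variable k : T -> nat.

Fixpoint alloc (l : list T) (b : nat) (x : T) : nat :=
  match l with
  | nil => 0%nat
  | a :: t =>
      if classic_eq_dec x a then Nat.min (k a) b
      else alloc t (b - Nat.min (k a) b) x
  end.

Lemma alloc_le l b x : (alloc l b x <= k x)%nat.
Proof.
  revert b; induction l as [|a l IH]; intros b; simpl; [lia|].
  destruct (classic_eq_dec x a) as [->|]; [lia|apply IH].
Qed.

Lemma alloc_notin l b x : ~ In x l -> alloc l b x = 0%nat.
Proof.
  revert b; induction l as [|a l IH]; intros b Hx; simpl; [reflexivity|].
  destruct (classic_eq_dec x a) as [->|]; [exfalso; apply Hx; now left|].
  apply IH; intros Hin; apply Hx; now right.
Qed.

Lemma alloc_sum l b : NoDup l ->
  list_sum (map (alloc l b) l) = Nat.min (list_sum (map k l)) b.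
Proof.
  intros Hl; revert b; induction Hl as [|a l Ha Hl IH]; intros b; simpl; [lia|].
  destruct (classic_eq_dec a a) as [_|]; [|congruence].
  rewrite (map_ext_in _ (alloc l (b - Nat.min (k a) b))), IH; [lia|].
  intros y Hy; simpl; destruct (classic_eq_dec y a) as [->|]; [contradiction|reflexivity].
Qed.

End Allocation.

Section Quantization.

Context {T : Type}.
Variables (k : T -> nat) (l : list T) (M : nat).
Hypotheses (Hl : NoDup l) (HM : (0 < M)%nat).

(** [None] plays the role of the extra symbol [e]; it receives the [M - sum k]
    units (truncated subtraction) left over by the greedy allocation. *)
Definition quantized (y : option T) : R :=
  match y with
  | Some x => INR (alloc k l M x) / INR M
  | None => INR (M - list_sum (map k l)) / INR M
  end.

Let INR_M_gt0 : 0 < INR M.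
Proof. now apply lt_0_INR. Qed.

Let support := None :: map Some l.

Let support_NoDup : NoDup support.
Proof.
  constructor.
  - rewrite in_map_iff; intros (x & Hx & _); discriminate.
  - apply Injective_map_NoDup; [intros x y H; now injection H|assumption].
Qed.

Lemma quantized_ge0 y : 0 <= quantized y.
Proof.
  destruct y; unfold quantized, Rdiv; apply Rmult_le_pos;
    solve [apply pos_INR | left; now apply Rinv_0_lt_compat].
Qed.

Let quantized_support y : quantized y = 0 \/ In y support.
Proof.
  destruct y as [x|]; [|right; now left].
  destruct (in_dec classic_eq_dec x l) as [Hx|Hx].
  - right; right; now apply in_map.
  - left; simpl; rewrite alloc_notin by assumption; simpl; lra.
Qed.

Lemma quantized_M_type : is_M_type M quantized.
Proof. intros [x|]; eexists; reflexivity. Qed.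

Lemma quantized_distribution : is_distribution quantized.
Proof.
  split; [exact quantized_ge0|].
  replace 1 with (fsum quantized support).
  { apply prob_fsum; auto using quantized_ge0. }
  simpl; rewrite fsum_map; simpl; rewrite fsum_INR_div, alloc_sum by assumption.
  rewrite <- Rdiv_plus_distr, <- plus_INR.
  replace (M - list_sum (map k l) + Nat.min (list_sum (map k l)) M)%nat with M by lia.
  field; lra.
Qed.

Lemma Egamma_set_quantized_le gamma (Q : T -> R) v : 0 <= gamma ->
  (forall x, INR (k x) <= gamma * INR M * Q x) ->
  Egamma_set gamma quantized (extend0 Q) v -> v <= quantized None.
Proof.
  intros Hg Hk; apply (Egamma_set_le_dominated_off _ _ _ support); auto using quantized_ge0.
  - simpl; lra.
  - intros [x|] Hx; [simpl|congruence].
    apply (Rmult_le_reg_r (INR M)); [assumption|].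
    replace (INR (alloc k l M x) / INR M * INR M) with (INR (alloc k l M x)) by (field; lra).
    pose proof (le_INR _ _ (alloc_le k l M x)); specialize (Hk x); lra.
Qed.

End Quantization.

Lemma residual_mass_le (M K : nat) a : (0 < M)%nat -> a * INR M <= INR K ->
  INR (M - K) / INR M <= Rmax 0 (1 - a).
Proof.
  intros HM Ha; assert (0 < INR M) by now apply lt_0_INR.
  destruct (Nat.le_gt_cases M K) as [HMK|HMK].
  - replace (M - K)%nat with 0%nat by lia; simpl.
    unfold Rdiv; rewrite Rmult_0_l; apply Rmax_l.
  - rewrite minus_INR by lia; eapply Rle_trans; [|apply Rmax_r].
    apply (Rmult_le_reg_r (INR M)); [assumption|].
    replace ((INR M - INR K) / INR M * INR M) with (INR M - INR K) by (field; lra).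
    lra.
Qed.

Theorem mainTheorem5 (X : Type) (PX : X -> R) (M : nat) (gamma : R)
  (hPX : is_distribution PX) (hM : (0 < M)%nat) (hgamma : 1 <= gamma)
  (pe : R) (hpe : prob PX (info_le PX gamma M) pe) :
  exists Phat : option X -> R,
    is_distribution Phat /\ is_M_type M Phat /\
    exists e : R, Egamma gamma Phat (extend0 PX) e /\
      e <= Rmax 0 (1 - gamma / 2 * pe).
Proof.
  assert (Hc : 0 < gamma * INR M) by (apply Rmult_lt_0_compat; [lra|now apply lt_0_INR]).
  destruct (enumerate_heavy_atoms PX (info_le PX gamma M) (/ (gamma * INR M)) hPX)
    as (l & Hl & Hheavy).
  { now apply Rinv_0_lt_compat. }
  { intros x Hx; apply (Rmult_le_reg_l (gamma * INR M)); [assumption|].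
    rewrite Rinv_r by lra; now apply info_le_mass. }
  set (k x := nat_floor (gamma * INR M * PX x)).
  assert (Hk : forall x, INR (k x) <= gamma * INR M * PX x).
  { intros x; apply nat_floor_spec, Rmult_le_pos; [lra|apply hPX]. }
  assert (HK : gamma / 2 * pe * INR M <= INR (list_sum (map k l))).
  { assert (pe <= fsum PX l).
    { apply (prob_le_fsum PX (info_le PX gamma M)); [apply hPX|assumption|].
      intros x Hx; right; now apply Hheavy. }
    rewrite <- fsum_INR; apply Rle_trans with (gamma * INR M / 2 * fsum PX l); [nra|].
    rewrite <- fsum_scale; apply fsum_le; intros x Hx.
    apply Hheavy, (info_le_mass PX gamma M x Hc), le_twice_nat_floor in Hx.
    unfold k; lra. }
  exists (quantized k l M); split; [|split].
  - now apply quantized_distribution.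
  - apply quantized_M_type.
  - apply Egamma_exists_le; intros v Hv.
    eapply Rle_trans; [apply (Egamma_set_quantized_le k l M Hl hM gamma PX); auto; lra|].
    now apply residual_mass_le.
Qed.
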